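(* The space $C^\infty(\mathbb R,\mathcal S(\mathbb R))$ of smooth curves in $\mathcal S(\mathbb R)$ consists (via $c\leftrightarrow f$, $f(t,x)=c(t)(x)$) exactly of all functions $f\in C^\infty(\mathbb R^2,\mathbb R)$ with the following property: for all $k,n,m\in\mathbb N_{\ge0}$ the expression $(1+|x|^2)^k\partial_t^n\partial_x^mf(t,x)$ is bounded uniformly in $x\in\mathbb R$, locally uniformly in $t\in\mathbb R$.
   Context: $\mathcal S(\mathbb R)$ is the nuclear Fréchet space of rapidly decreasing smooth functions $f$, i.e. those for which $x\mapsto(1+|x|^2)^k\partial_x^nf(x)$ is bounded for all $k,n$, with the locally convex topology given by these seminorms. Smoothness of curves is in the usual (convenient) sense. *)

From Stdlib Require Import Reals.
From Coquelicot Require Import Coquelicot.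
Open Scope R_scope.

Definition smooth1 (g : R -> R) : Prop := forall (n : nat) (x : R), ex_derive_n g n x.

Definition sw (k m : nat) (g : R -> R) (x : R) : R :=
  (1 + (Rabs x) ^ 2) ^ k * Derive_n g m x.

Definition in_Schwartz (g : R -> R) : Prop :=
  smooth1 g /\ forall k m : nat, exists B : R, forall x : R, Rabs (sw k m g x) <= B.

Definition Schwartz_lim (F : R -> R -> R) (h0 : R) (g : R -> R) : Prop :=
  forall (k m : nat) (eps : R), 0 < eps ->
    exists delta : R, 0 < delta /\
      forall h : R, 0 < Rabs (h - h0) < delta ->
        forall x : R, Rabs (sw k m (fun y => F h y - g y) x) <= eps.

(** Smooth curves c : R -> S(R) (c t = fun x => c t x): all iterated derivatives
    exist, the derivative being the limit in S(R) of difference quotients.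
    (For Fréchet spaces such as S(R) this is smoothness in the convenient sense.) *)
Definition smooth_curve_Schwartz (c : R -> R -> R) : Prop :=
  exists d : nat -> R -> R -> R,
    d 0%nat = c /\
    (forall (n : nat) (t : R), in_Schwartz (d n t)) /\
    (forall (n : nat) (t : R),
       Schwartz_lim (fun h x => (d n (t + h) x - d n t x) / h) 0 (d (S n) t)).

(** f in C^oo(R^2,R): a family D n m of jointly continuous functions with
    D 0 0 = f, d/dt D n m = D (n+1) m and d/dx D n m = D n (m+1)
    (so that D n m = ∂_t^n ∂_x^m f). *)
Definition smooth2 (f : R -> R -> R) : Prop :=
  exists D : nat -> nat -> R -> R -> R,
    D 0%nat 0%nat = f /\
    forall (n m : nat) (t x : R),
      is_derive (fun s => D n m s x) t (D (S n) m t x) /\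
      is_derive (fun y => D n m t y) x (D n (S m) t x) /\
      continuity_2d_pt (D n m) t x.

Definition pdt_pdx (f : R -> R -> R) (n m : nat) (t x : R) : R :=
  Derive_n (fun s => Derive_n (fun y => f s y) m x) n t.

(* A smooth curve in S(R) yields the partial derivatives D n m t x := (c^(n)(t))^(m)(x):
   the Schwartz difference quotients converge in particular pointwise (∂_t) and make
   every weighted derivative locally Lipschitz in t, which gives joint continuity and
   the locally uniform weighted bounds.  Conversely, for f as on the right-hand side the
   weighted error of the difference quotient in t is, by the mean value theorem applied
   twice, at most |h| times the locally uniform bound of (1+|x|^2)^k ∂_t^(n+2) ∂_x^m f,
   so t ↦ ∂_t^n f(t,.) is differentiable in S(R) with derivative ∂_t^(n+1) f(t,.). *)
From Stdlib Require Import Reals Lra.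
From Coquelicot Require Import Coquelicot.
Open Scope R_scope.

Definition partials_locally_Schwartz_bounded (f : R -> R -> R) : Prop :=
  forall (k n m : nat) (t0 : R),
    exists delta B : R, 0 < delta /\
      forall t x : R, Rabs (t - t0) < delta ->
        Rabs ((1 + (Rabs x) ^ 2) ^ k * pdt_pdx f n m t x) <= B.

Lemma Derive_n_chain (g : R -> R) (G : nat -> R -> R) :
  (forall y, G 0%nat y = g y) -> (forall m y, is_derive (G m) y (G (S m) y)) ->
  forall m y, Derive_n g m y = G m y.
Proof.
  intros G0 dG m; induction m as [|m IHm]; intro y; simpl.
  - now rewrite G0.
  - rewrite (Derive_ext _ (G m)) by exact IHm.
    apply is_derive_unique, dG.
Qed.

Lemma ex_derive_n_chain (g : R -> R) (G : nat -> R -> R) :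
  (forall y, G 0%nat y = g y) -> (forall m y, is_derive (G m) y (G (S m) y)) ->
  forall m y, ex_derive_n g m y.
Proof.
  intros G0 dG [|m] y; simpl; [exact I |].
  apply ex_derive_ext with (G m).
  - intro z; symmetry; exact (Derive_n_chain g G G0 dG m z).
  - exists (G (S m) y); apply dG.
Qed.

Lemma pdt_pdx_chain (f : R -> R -> R) (D : nat -> nat -> R -> R -> R) :
  D 0%nat 0%nat = f ->
  (forall n m t x, is_derive (fun s => D n m s x) t (D (S n) m t x)) ->
  (forall n m t x, is_derive (fun y => D n m t y) x (D n (S m) t x)) ->
  forall n m t x, pdt_pdx f n m t x = D n m t x.
Proof.
  intros <- Dt Dx n m t x; unfold pdt_pdx.
  rewrite (Derive_n_ext _ (fun s => D 0%nat m s x)).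
  - exact (Derive_n_chain _ (fun n s => D n m s x) (fun _ => eq_refl)
             (fun n s => Dt n m s x) n t).
  - intro s.
    exact (Derive_n_chain _ (fun m y => D 0%nat m s y) (fun _ => eq_refl)
             (fun m y => Dx 0%nat m s y) m x).
Qed.

Lemma smooth1_locally (g : R -> R) (n : nat) (x : R) : smooth1 g ->
  locally x (fun y : R => forall k, (k <= n)%nat -> ex_derive_n g k y).
Proof. intros Hg; apply filter_forall; intros; apply Hg. Qed.

Lemma smooth1_scal_r (g : R -> R) (a : R) : smooth1 g -> smooth1 (fun y => g y * a).
Proof. intros Hg n x; apply ex_derive_n_scal_r, Hg. Qed.

Lemma smooth1_minus (g1 g2 : R -> R) :
  smooth1 g1 -> smooth1 g2 -> smooth1 (fun y => g1 y - g2 y).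
Proof. intros H1 H2 n x; apply ex_derive_n_minus; apply smooth1_locally; assumption. Qed.

Lemma Derive_n_diff_quotient (g1 g2 g3 : R -> R) (h : R) (m : nat) (x : R) :
  smooth1 g1 -> smooth1 g2 -> smooth1 g3 ->
  Derive_n (fun y => (g1 y - g2 y) / h - g3 y) m x =
  (Derive_n g1 m x - Derive_n g2 m x) / h - Derive_n g3 m x.
Proof.
  intros H1 H2 H3.
  rewrite (Derive_n_ext _ (fun y => (g1 y * / h - g2 y * / h) - g3 y))
    by (intro; unfold Rdiv; ring).
  rewrite Derive_n_minus.
  2: { apply smooth1_locally, smooth1_minus; apply smooth1_scal_r; assumption. }
  2: { apply smooth1_locally; assumption. }
  rewrite Derive_n_minus by (apply smooth1_locally, smooth1_scal_r; assumption).
  rewrite !Derive_n_scal_r; unfold Rdiv; ring.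
Qed.

Lemma continuity_2d_pt_Lipschitz (F : R -> R -> R) (t x delta C B : R) :
  0 < delta -> 0 <= C -> 0 <= B ->
  (forall u v, Rabs (u - t) < delta -> Rabs (F u v - F t v) <= C * Rabs (u - t)) ->
  (forall v, Rabs (F t v - F t x) <= B * Rabs (v - x)) ->
  continuity_2d_pt F t x.
Proof.
  intros Hdelta HC HB Lip_t Lip_x eps.
  set (q := eps / (C + B + 1)).
  assert (Hq : 0 < q) by (apply Rdiv_lt_0_compat; [apply cond_pos | lra]).
  assert (Hqe : q * (C + B + 1) = eps) by (unfold q; field; lra).
  exists (mkposreal _ (Rmin_pos _ _ Hdelta Hq)); simpl; intros u v Hu Hv.
  assert (Hu1 := Rlt_le_trans _ _ _ Hu (Rmin_l _ _)).
  assert (Hu2 := Rlt_le_trans _ _ _ Hu (Rmin_r _ _)).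
  assert (Hv2 := Rlt_le_trans _ _ _ Hv (Rmin_r _ _)).
  assert (Ht := Lip_t u v Hu1).
  assert (Hx := Lip_x v).
  replace (F u v - F t x) with ((F u v - F t v) + (F t v - F t x)) by ring.
  eapply Rle_lt_trans; [apply Rabs_triang |].
  assert (C * Rabs (u - t) <= C * q) by (apply Rmult_le_compat_l; lra).
  assert (B * Rabs (v - x) <= B * q) by (apply Rmult_le_compat_l; lra).
  nra.
Qed.

Lemma diff_quotient_remainder (f f1 f2 : R -> R) (t r M : R) :
  (forall s, Rabs (s - t) < r ->
     is_derive f s (f1 s) /\ is_derive f1 s (f2 s) /\ Rabs (f2 s) <= M) ->
  forall h, h <> 0 -> Rabs h < r ->
    Rabs ((f (t + h) - f t) / h - f1 t) <= M * Rabs h.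
Proof.
  intros Hf h hn hr.
  assert (Hth : Rabs (t + h - t) <= Rabs h) by (right; f_equal; ring).
  destruct (MVT_cor4 f f1 t (Rabs h) (fun s Hs => proj1 (Hf s ltac:(lra))) (t + h) Hth)
    as [c1 [Hc1 Hc1t]].
  assert (Hc1h : Rabs (c1 - t) <= Rabs h) by lra.
  destruct (MVT_cor4 f1 f2 t (Rabs h) (fun s Hs => proj1 (proj2 (Hf s ltac:(lra)))) c1 Hc1h)
    as [c2 [Hc2 Hc2t]].
  replace (t + h - t) with h in Hc1 by ring.
  replace ((f (t + h) - f t) / h - f1 t) with (f2 c2 * (c1 - t))
    by (rewrite Hc1, <- Hc2; field; exact hn).
  rewrite Rabs_mult.
  assert (Hf2 := proj2 (proj2 (Hf c2 ltac:(lra)))).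
  apply Rmult_le_compat; try apply Rabs_pos; lra.
Qed.

Section DifferentiableCurve.

Variables c c' : R -> R -> R.
Hypothesis c_Schwartz : forall t, in_Schwartz (c t).
Hypothesis c'_Schwartz : forall t, in_Schwartz (c' t).
Hypothesis c_derive : forall t,
  Schwartz_lim (fun h x => (c (t + h) x - c t x) / h) 0 (c' t).

Lemma curve_diff_quotient_small (k m : nat) (t eps : R) : 0 < eps ->
  exists delta, 0 < delta /\ forall h x, h <> 0 -> Rabs h < delta ->
    Rabs ((1 + Rabs x ^ 2) ^ k *
          ((Derive_n (c (t + h)) m x - Derive_n (c t) m x) / h - Derive_n (c' t) m x))
      <= eps.
Proof.
  intros Heps; destruct (c_derive t k m eps Heps) as [delta [Hdelta H]].
  exists delta; split; [exact Hdelta |]; intros h x hn hdelta.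
  assert (Hh : 0 < Rabs (h - 0) < delta)
    by (rewrite Rminus_0_r; split; [apply Rabs_pos_lt |]; assumption).
  specialize (H h Hh x); unfold sw in H.
  rewrite Derive_n_diff_quotient in H
    by first [exact (proj1 (c_Schwartz _)) | exact (proj1 (c'_Schwartz _))].
  exact H.
Qed.

Lemma curve_increment_bound (k m : nat) (t : R) :
  exists delta C, 0 < delta /\ 0 <= C /\ forall h x, Rabs h < delta ->
    Rabs ((1 + Rabs x ^ 2) ^ k * (Derive_n (c (t + h)) m x - Derive_n (c t) m x))
      <= C * Rabs h.
Proof.
  destruct (curve_diff_quotient_small k m t 1 Rlt_0_1) as [delta [Hdelta H]].
  destruct (proj2 (c'_Schwartz t) k m) as [B HB].
  assert (B0 : 0 <= B) by (eapply Rle_trans; [apply Rabs_pos | apply (HB 0)]).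
  exists delta, (1 + B); split; [exact Hdelta | split; [lra |]].
  intros h x hdelta; destruct (Req_dec h 0) as [-> | hn].
  - rewrite Rplus_0_r, Rminus_eq_0, Rmult_0_r, Rabs_R0; lra.
  - specialize (H h x hn hdelta); specialize (HB x); unfold sw in HB.
    set (w := (1 + Rabs x ^ 2) ^ k) in *.
    set (E := Derive_n (c' t) m x) in *.
    set (A := Derive_n (c (t + h)) m x - Derive_n (c t) m x) in *.
    replace (w * A) with (h * (w * (A / h - E) + w * E)) by (field; exact hn).
    rewrite Rabs_mult, Rmult_comm; apply Rmult_le_compat_r; [apply Rabs_pos |].
    eapply Rle_trans; [apply Rabs_triang | lra].
Qed.

Lemma curve_derive_pointwise (m : nat) (t x : R) :
  is_derive (fun s => Derive_n (c s) m x) t (Derive_n (c' t) m x).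
Proof.
  apply is_derive_Reals; intros eps Heps.
  destruct (curve_diff_quotient_small 0 m t (eps / 2)) as [delta [Hdelta H]]; [lra |].
  exists (mkposreal delta Hdelta); intros h hn hdelta.
  specialize (H h x hn hdelta); rewrite pow_O, Rmult_1_l in H; lra.
Qed.

Lemma curve_derivatives_continuous (m : nat) (t x : R) :
  continuity_2d_pt (fun s y => Derive_n (c s) m y) t x.
Proof.
  destruct (curve_increment_bound 0 m t) as [delta [C [Hdelta [HC Lip_t]]]].
  destruct (proj2 (c_Schwartz t) 0%nat (S m)) as [B HB].
  assert (B0 : 0 <= B) by (eapply Rle_trans; [apply Rabs_pos | apply (HB 0)]).
  apply (continuity_2d_pt_Lipschitz _ t x delta C B); try assumption.
  - intros u v Hu; specialize (Lip_t (u - t) v Hu).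
    rewrite pow_O, Rmult_1_l in Lip_t; replace (t + (u - t)) with u in Lip_t by ring.
    exact Lip_t.
  - intro v; apply bounded_variation with (dh := Derive_n (c t) (S m)); intros s _.
    split; [apply Derive_correct, (proj1 (c_Schwartz t) (S m)) |].
    specialize (HB s); unfold sw in HB; rewrite pow_O, Rmult_1_l in HB; exact HB.
Qed.

Lemma curve_locally_bounded (k m : nat) (t0 : R) :
  exists delta B, 0 < delta /\ forall t x, Rabs (t - t0) < delta ->
    Rabs ((1 + Rabs x ^ 2) ^ k * Derive_n (c t) m x) <= B.
Proof.
  destruct (curve_increment_bound k m t0) as [delta [C [Hdelta [HC Lip]]]].
  destruct (proj2 (c_Schwartz t0) k m) as [B HB].
  exists delta, (B + C * delta); split; [exact Hdelta |]; intros t x Ht.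
  specialize (Lip (t - t0) x Ht); replace (t0 + (t - t0)) with t in Lip by ring.
  specialize (HB x); unfold sw in HB.
  set (w := (1 + Rabs x ^ 2) ^ k) in *.
  replace (w * Derive_n (c t) m x) with
    (w * Derive_n (c t0) m x + w * (Derive_n (c t) m x - Derive_n (c t0) m x)) by ring.
  eapply Rle_trans; [apply Rabs_triang |].
  assert (C * Rabs (t - t0) <= C * delta) by (apply Rmult_le_compat_l; lra).
  lra.
Qed.

End DifferentiableCurve.

Lemma smooth_curve_Schwartz_partials (f : R -> R -> R) :
  smooth_curve_Schwartz f -> smooth2 f /\ partials_locally_Schwartz_bounded f.
Proof.
  intros [d [Hd0 [Hd Hd_derive]]].
  set (D := fun n m t x => Derive_n (d n t) m x).
  assert (D0 : D 0%nat 0%nat = f) by (unfold D; simpl; now rewrite Hd0).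
  assert (Dt : forall n m t x, is_derive (fun s => D n m s x) t (D (S n) m t x))
    by (intros n; exact (curve_derive_pointwise _ _ (Hd n) (Hd (S n)) (Hd_derive n))).
  assert (Dx : forall n m t x, is_derive (fun y => D n m t y) x (D n (S m) t x))
    by (intros n m t x; apply Derive_correct, (proj1 (Hd n t) (S m))).
  split.
  - exists D; split; [exact D0 |]; intros n m t x.
    split; [apply Dt | split; [apply Dx |]].
    exact (curve_derivatives_continuous _ _ (Hd n) (Hd (S n)) (Hd_derive n) m t x).
  - intros k n m t0.
    destruct (curve_locally_bounded _ _ (Hd n) (Hd (S n)) (Hd_derive n) k m t0)
      as [delta [B [Hdelta HB]]].
    exists delta, B; split; [exact Hdelta |]; intros t x Ht.
    rewrite (pdt_pdx_chain f D D0 Dt Dx); exact (HB t x Ht).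
Qed.

Section PartialsFamily.

Variable D : nat -> nat -> R -> R -> R.
Hypothesis D_dt : forall n m t x, is_derive (fun s => D n m s x) t (D (S n) m t x).
Hypothesis D_dx : forall n m t x, is_derive (fun y => D n m t y) x (D n (S m) t x).
Hypothesis D_bounded : forall (k n m : nat) (t0 : R),
  exists delta B, 0 < delta /\ forall t x, Rabs (t - t0) < delta ->
    Rabs ((1 + Rabs x ^ 2) ^ k * D n m t x) <= B.

Lemma Derive_n_partials (n : nat) (t : R) (m : nat) (x : R) :
  Derive_n (D n 0%nat t) m x = D n m t x.
Proof.
  exact (Derive_n_chain _ (fun m y => D n m t y) (fun _ => eq_refl) (fun m y => D_dx n m t y) m x).
Qed.

Lemma partials_smooth (n : nat) (t : R) : smooth1 (D n 0%nat t).
Proof.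
  exact (ex_derive_n_chain _ (fun m y => D n m t y) (fun _ => eq_refl) (fun m y => D_dx n m t y)).
Qed.

Lemma partials_Schwartz (n : nat) (t : R) : in_Schwartz (D n 0%nat t).
Proof.
  split; [apply partials_smooth |].
  intros k m; destruct (D_bounded k n m t) as [delta [B [Hdelta HB]]].
  exists B; intro x; unfold sw; rewrite Derive_n_partials.
  apply HB; rewrite Rminus_eq_0, Rabs_R0; exact Hdelta.
Qed.

Lemma partials_Schwartz_derive (n : nat) (t : R) :
  Schwartz_lim (fun h x => (D n 0%nat (t + h) x - D n 0%nat t x) / h) 0 (D (S n) 0%nat t).
Proof.
  intros k m eps Heps.
  destruct (D_bounded k (S (S n)) m t) as [delta [B [Hdelta HB]]].
  assert (B0 : 0 <= B).
  { eapply Rle_trans; [apply Rabs_pos | apply (HB t 0)].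
    rewrite Rminus_eq_0, Rabs_R0; exact Hdelta. }
  assert (Hq : 0 < eps / (B + 1)) by (apply Rdiv_lt_0_compat; lra).
  exists (Rmin delta (eps / (B + 1))); split; [apply Rmin_pos; lra |].
  intros h [hpos hlt] x; rewrite Rminus_0_r in hpos, hlt.
  assert (hn : h <> 0) by (intros ->; rewrite Rabs_R0 in hpos; lra).
  assert (hdelta := Rlt_le_trans _ _ _ hlt (Rmin_l _ _)).
  assert (heps := Rlt_le_trans _ _ _ hlt (Rmin_r _ _)).
  unfold sw; rewrite Derive_n_diff_quotient by apply partials_smooth.
  rewrite !Derive_n_partials.
  set (w := (1 + Rabs x ^ 2) ^ k).
  assert (Hrem := diff_quotient_remainder (fun s => w * D n m s x)
    (fun s => w * D (S n) m s x) (fun s => w * D (S (S n)) m s x) t delta B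
    ltac:(intros s Hs; split; [|split]; [apply is_derive_scal, D_dt .. | exact (HB s x Hs)])
    h hn hdelta).
  replace (w * ((D n m (t + h) x - D n m t x) / h - D (S n) m t x))
    with ((w * D n m (t + h) x - w * D n m t x) / h - w * D (S n) m t x)
    by (field; exact hn).
  eapply Rle_trans; [exact Hrem |].
  assert (B * Rabs h <= B * (eps / (B + 1))) by (apply Rmult_le_compat_l; lra).
  assert (eps / (B + 1) * (B + 1) = eps) by (field; lra).
  nra.
Qed.

End PartialsFamily.

Lemma partials_smooth_curve_Schwartz (f : R -> R -> R) :
  smooth2 f -> partials_locally_Schwartz_bounded f -> smooth_curve_Schwartz f.
Proof.
  intros [D [D0 HD]] Hbounded.
  assert (Dt : forall n m t x, is_derive (fun s => D n m s x) t (D (S n) m t x))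
    by apply HD.
  assert (Dx : forall n m t x, is_derive (fun y => D n m t y) x (D n (S m) t x))
    by apply HD.
  assert (D_bounded : forall k n m t0, exists delta B, 0 < delta /\
    forall t x, Rabs (t - t0) < delta -> Rabs ((1 + Rabs x ^ 2) ^ k * D n m t x) <= B).
  { intros k n m t0; setoid_rewrite <- (pdt_pdx_chain f D D0 Dt Dx); apply Hbounded. }
  exists (fun n => D n 0%nat); split; [exact D0 | split].
  - exact (partials_Schwartz D Dx D_bounded).
  - exact (partials_Schwartz_derive D Dt Dx D_bounded).
Qed.

Theorem lemma6p3 (f : R -> R -> R) :
  smooth_curve_Schwartz f <->
  (smooth2 f /\
   forall (k n m : nat) (t0 : R),
     exists delta B : R, 0 < delta /\
       forall t x : R, Rabs (t - t0) < delta ->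
         Rabs ((1 + (Rabs x) ^ 2) ^ k * pdt_pdx f n m t x) <= B).
Proof.
  split.
  - apply smooth_curve_Schwartz_partials.
  - intros [Hsmooth Hbounded]; exact (partials_smooth_curve_Schwartz f Hsmooth Hbounded).
Qed.
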